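(* In the unique symmetric subgame perfect equilibrium of the pay-to-bid game, both with and without re-entry, in any round the probability that a given bidding player (a player who plays Bid in that round) wins the object in that round equals $\frac{u(c)}{u(v-s)}$.
   Context: Pay-to-bid game: an object has monetary value $v>0$ that is common knowledge; there are $n\ge 2$ players; the bid fee is $c>0$ and the fixed sale price is $s\ge 0$, with $c<v-s$. Play proceeds in rounds $t=1,2,3,\dots$ with complete information. In each round every active player simultaneously chooses an action in $\{\text{Bid},\text{No Bid}\}$. Each Bid costs $c$, paid immediately to the seller. If exactly one active player bids in a round, she wins the object (value $v$), pays $s$, and the game ends; if two or more bid, play continues; if none bids, the round is replayed. With re-entry, all $n$ players are active in every round; without re-entry, the active players in round $t+1$ are those who bid in round $t$. Players do not discount; payoff is $u$(final wealth) with $u(x)=\frac{1-e^{-\rho x}}{\rho}$ for a constant $\rho<0$, or $u(x)=x$ when $\rho=0$. A bidder wins in a round exactly when all other active players play No Bid in that round. *)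

From Stdlib Require Import Reals Lra List Arith Bool.
Import ListNotations.
Open Scope R_scope.

Definition util (rho x : R) : R :=
  if Req_EM_T rho 0 then x else (1 - exp (- rho * x)) / rho.

(** An action profile of one round: entry i = true iff player i plays Bid.
    Players are 0 .. n-1. *)
Definition profile := list bool.
(** A history: the list of past rounds' action profiles, in chronological order. *)
Definition history := list profile.

Definition bids (a : profile) (i : nat) : bool := nth i a false.
Definition nbidders (a : profile) : nat := length (filter (fun b => b) a).

Definition ended (h : history) : bool := existsb (fun a => Nat.eqb (nbidders a) 1) h.

Definition won (i : nat) (h : history) : bool :=
  existsb (fun a => Nat.eqb (nbidders a) 1 && bids a i) h.

Fixpoint all_profiles (n : nat) : list profile :=
  match n with
  | O => [nil]
  | S m => flat_map (fun a => [true :: a; false :: a]) (all_profiles m)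
  end.

Section Game.
Variables (n : nat) (reentry : bool) (rho c v s : R).

(** With re-entry everybody is always active;
    without re-entry the active players of the next round are those who bid,
    except when nobody bid (round replayed with the same active players). *)
Definition active_step (act : nat -> bool) (a : profile) : nat -> bool :=
  if reentry then act
  else if Nat.eqb (nbidders a) 0 then act else (fun i => bids a i).

Definition active (h : history) (i : nat) : bool :=
  Nat.ltb i n && fold_left active_step h (fun _ => true) i.

(** Final (or current) wealth of player i, starting from wealth 0:
    each Bid costs c; the winner receives v and pays s. *)
Definition wealth (i : nat) (h : history) : R :=
  - c * INR (length (filter (fun a => bids a i) h))
  + (if won i h then v - s else 0).

(** Behavioral strategy profile: sigma i h = probability that player i plays
    Bid at history h. *)
Definition strategy_profile := nat -> history -> R.

Definition valid_profile (sigma : strategy_profile) : Prop :=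
  forall i h, 0 <= sigma i h <= 1.

(** Probability of a round profile a (entries starting at player index k),
    players acting independently; inactive players play No Bid. *)
Fixpoint prof_prob (q : nat -> R) (act : nat -> bool) (a : profile) (k : nat) : R :=
  match a with
  | nil => 1
  | b :: a' =>
      (if act k then (if b then q k else 1 - q k) else (if b then 0 else 1))
      * prof_prob q act a' (S k)
  end.

(** Expected utility of player i from history h, truncated after T more rounds
    (a play not yet ended at the horizon is evaluated at current wealth). *)
Fixpoint EU (sigma : strategy_profile) (i : nat) (h : history) (T : nat) : R :=
  match T with
  | O => util rho (wealth i h)
  | S T' =>
      if ended h then util rho (wealth i h)
      else fold_right Rplus 0
             (map (fun a => prof_prob (fun j => sigma j h) (active h) a 0
                            * EU sigma i (h ++ [a]) T')
                  (all_profiles n))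
  end.

Inductive valid_history : history -> Prop :=
| vh_nil : valid_history nil
| vh_snoc : forall h a,
    valid_history h -> ended h = false -> length a = n ->
    (forall i, bids a i = true -> active h i = true) ->
    valid_history (h ++ [a]).

Definition deviate (sigma : strategy_profile) (i : nat) (tau : history -> R)
  : strategy_profile :=
  fun j h => if Nat.eqb j i then tau h else sigma j h.

(** Subgame perfect equilibrium: in every subgame (valid non-ended history),
    each player's expected utility (limit of the truncated expected utilities)
    exists and no deviation does better (limsup of the deviator's truncated
    expected utilities is at most the equilibrium value). *)
Definition is_SPE (sigma : strategy_profile) : Prop :=
  valid_profile sigma /\
  forall h, valid_history h -> ended h = false ->
  forall i, (i < n)%nat ->
  exists V, Un_cv (fun T => EU sigma i h T) V /\
    forall tau : history -> R, (forall h', 0 <= tau h' <= 1) ->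
    forall eps, eps > 0 -> exists N, forall T, (T >= N)%nat ->
      EU (deviate sigma i tau) i h T <= V + eps.

Definition symmetric (sigma : strategy_profile) : Prop :=
  forall h i j, valid_history h -> active h i = true -> active h j = true ->
    sigma i h = sigma j h.

(** Probability that a bidding player i wins at history h: all other active
    players play No Bid. *)
Definition win_prob_if_bid (sigma : strategy_profile) (h : history) (i : nat) : R :=
  fold_right Rmult 1
    (map (fun j => if active h j && negb (Nat.eqb j i) then 1 - sigma j h else 1)
         (seq 0 n)).

End Game.

(** Fix a symmetric subgame perfect equilibrium [sigma] of the pay-to-bid game
   and an active player [i] at a reachable, non-ended history [h].  Her
   equilibrium value is the limit of her truncated expected utilities; by the
   CARA property it decomposes as [value = u(w) + exp(-rho w) * rent], where
   [w] is her current wealth and the normalized [rent] lies in [[0, u(v-s)]]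
   (never bidding again secures [u(w)]).

   The core of the proof is that all rents vanish.  If [R0 := sup rent > 0],
   take a node whose rent is within a small deficit [delta] of [R0].  Bidding
   costs [c], and a symmetric rival makes cheap wins rare, so a one-round
   inequality ([local_ineq], arithmetic in [one_round_potential]) holds for
   the potential [leaving probability + K * deficit]; summed along the
   histories where [i] keeps staying without bidding, it shows that she stays
   forever with probability at least [1 - K delta].  But she only collects her
   rent when she leaves this staying process, so her value is small once the
   staying probability has nearly stabilized ([stay_surplus_le]): a
   contradiction ([no_near_maximal_rent], [rent_zero]).

   With zero rents, [value = u(w)].  A symmetric profile with no bidding would
   give a lone bidder a sure win, so players bid with positive probability,
   and indifference [u(w) = p u(w - c + v - s) + (1 - p) u(w - c)] yields
   [p = u(c)/u(v-s)] ([cara_indifference]). *)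

From Stdlib Require Import Reals Lra Lia List Arith Bool ClassicalEpsilon.
Import ListNotations.
Open Scope R_scope.

Definition lsum (L : list profile) (f : profile -> R) : R := fold_right Rplus 0 (map f L).

Lemma lsum_ext L f g : (forall a, In a L -> f a = g a) -> lsum L f = lsum L g.
Proof. induction L; unfold lsum in *; simpl; intros H; auto. rewrite H, IHL; auto. Qed.

Lemma lsum_plus L f g : lsum L (fun a => f a + g a) = lsum L f + lsum L g.
Proof. induction L; unfold lsum in *; simpl; [lra|]. rewrite IHL. lra. Qed.

Lemma lsum_scal L k f : lsum L (fun a => k * f a) = k * lsum L f.
Proof. induction L; unfold lsum in *; simpl; [lra|]. rewrite IHL. lra. Qed.

Lemma lsum_minus L f g : lsum L (fun a => f a - g a) = lsum L f - lsum L g.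
Proof. induction L; unfold lsum in *; simpl; [lra|]. rewrite IHL. lra. Qed.

Lemma lsum_le L f g : (forall a, In a L -> f a <= g a) -> lsum L f <= lsum L g.
Proof.
  induction L; unfold lsum in *; simpl; intros H; [lra|].
  specialize (IHL (fun x hx => H x (or_intror hx))). specialize (H a (or_introl eq_refl)). lra.
Qed.

Lemma lsum_nonneg L f : (forall a, In a L -> 0 <= f a) -> 0 <= lsum L f.
Proof.
  intros H. apply Rle_trans with (lsum L (fun _ => 0)); [|apply lsum_le; auto].
  clear H; induction L; unfold lsum in *; simpl; lra.
Qed.

Lemma lsum_flat L (F : profile -> R) :
  lsum (flat_map (fun a => [true :: a; false :: a]) L) F
  = lsum L (fun a => F (true :: a) + F (false :: a)).
Proof. induction L; unfold lsum in *; simpl; auto. rewrite IHL. lra. Qed.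

Lemma all_profiles_length m a : In a (all_profiles m) <-> length a = m.
Proof.
  revert a; induction m; intros a; simpl.
  - split; [intros [<-|[]]; auto|]. destruct a; simpl; intros; [auto|discriminate].
  - rewrite in_flat_map. split.
    + intros [x [Hx Ha]]. apply IHm in Hx. destruct Ha as [<-|[<-|[]]]; simpl; auto.
    + intros Hl. destruct a as [|b a]; simpl in Hl; [discriminate|]. exists a. split.
      * apply IHm; lia.
      * destruct b; simpl; auto.
Qed.

Lemma lsum_point m (b : profile) (f : profile -> R) : length b = m ->
  lsum (all_profiles m) (fun a => if list_eq_dec bool_dec a b then f a else 0) = f b.
Proof.
  revert b f; induction m; intros b f Hb.
  - destruct b; [|discriminate]. unfold lsum; simpl.
    destruct (list_eq_dec bool_dec [] []); [lra|contradiction].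
  - destruct b as [|x b]; [discriminate|]. simpl in Hb. simpl. rewrite lsum_flat.
    rewrite (lsum_ext _ _ (fun a => if list_eq_dec bool_dec a b then f (x :: a) else 0)).
    + apply (IHm b (fun a => f (x :: a))). lia.
    + intros a _.
      destruct (list_eq_dec bool_dec (true :: a) (x :: b)) as [E1|N1];
      destruct (list_eq_dec bool_dec (false :: a) (x :: b)) as [E2|N2];
      destruct (list_eq_dec bool_dec a b) as [E|N];
      try (inversion E1; subst); try (inversion E2; subst); try congruence; try lra;
      destruct x; congruence.
Qed.

Lemma prod_ext (g1 g2 : nat -> R) L : (forall m, In m L -> g1 m = g2 m) ->
  fold_right Rmult 1 (map g1 L) = fold_right Rmult 1 (map g2 L).
Proof. intros H; f_equal; apply map_ext_in; auto. Qed.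

Lemma prod_one (g : nat -> R) L : (forall m, In m L -> g m = 1) -> fold_right Rmult 1 (map g L) = 1.
Proof. induction L; simpl; intros H; auto. rewrite H, IHL; auto. lra. Qed.

Lemma prod_nonneg (g : nat -> R) L :
  (forall m, In m L -> 0 <= g m) -> 0 <= fold_right Rmult 1 (map g L).
Proof. induction L; simpl; intros H; [lra|]. apply Rmult_le_pos; auto. Qed.

Lemma prod_le_factor (g : nat -> R) L j : In j L -> (forall m, In m L -> 0 <= g m <= 1) ->
  fold_right Rmult 1 (map g L) <= g j.
Proof.
  revert j; induction L as [|m L IH]; simpl; intros j Hj H; [contradiction|].
  assert (P0 : 0 <= fold_right Rmult 1 (map g L)) by (apply prod_nonneg; intros; apply H; auto).
  destruct (H m (or_introl eq_refl)) as [Hm1 Hm2].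
  destruct Hj as [<-|Hj].
  - destruct L as [|m' L].
    + simpl. lra.
    + assert (P1 : fold_right Rmult 1 (map g (m' :: L)) <= g m')
        by (apply IH; [left; auto|intros; apply H; auto]).
      destruct (H m' (or_intror (or_introl eq_refl))). nra.
  - specialize (IH j Hj (fun x hx => H x (or_intror hx))). nra.
Qed.

Lemma prod_range (g : nat -> R) L : (forall m, In m L -> 0 <= g m <= 1) ->
  0 <= fold_right Rmult 1 (map g L) <= 1.
Proof.
  induction L; simpl; intros H; [lra|].
  destruct (IHL (fun x hx => H x (or_intror hx))). destruct (H a (or_introl eq_refl)). nra.
Qed.

Lemma prod_compare (g h : nat -> R) (q : R) j L : NoDup L -> 0 <= q <= 1 ->
  (forall m, In m L -> m <> j -> g m = h m) -> (forall m, In m L -> 0 <= h m <= 1) ->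
  (In j L -> g j = q) ->
  q * fold_right Rmult 1 (map h L) <= fold_right Rmult 1 (map g L).
Proof.
  induction L as [|m L IH]; simpl; intros ND Hq Heq Hh Hj; [lra|].
  inversion ND; subst.
  assert (P : 0 <= fold_right Rmult 1 (map h L) <= 1)
    by (apply prod_range; intros; apply Hh; auto).
  destruct (Hh m (or_introl eq_refl)).
  destruct (Nat.eq_dec m j) as [->|Hne].
  - rewrite Hj by auto.
    rewrite (prod_ext g h) by (intros x Hx; apply Heq; auto; intros ->; contradiction).
    assert (h j * fold_right Rmult 1 (map h L) <= fold_right Rmult 1 (map h L)) by nra.
    apply Rmult_le_compat_l; lra.
  - rewrite Heq by auto.
    assert (IH' : q * fold_right Rmult 1 (map h L) <= fold_right Rmult 1 (map g L)) by (apply IH; auto).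
    apply (Rmult_le_compat_l (h m)) in IH'; lra.
Qed.

Definition bid_factor (Q : nat -> R) (act : nat -> bool) (k : nat) (b : bool) : R :=
  if act k then (if b then Q k else 1 - Q k) else (if b then 0 else 1).

Lemma prof_prob_cons Q act b a k :
  prof_prob Q act (b :: a) k = bid_factor Q act k b * prof_prob Q act a (S k).
Proof. reflexivity. Qed.

Lemma prof_prob_sum Q act m k : lsum (all_profiles m) (fun a => prof_prob Q act a k) = 1.
Proof.
  revert k; induction m; intros k; [unfold lsum; simpl; lra|].
  simpl. rewrite lsum_flat.
  rewrite (lsum_ext _ _ (fun a => 1 * prof_prob Q act a (S k))).
  - rewrite lsum_scal, IHm. lra.
  - intros a _. rewrite !prof_prob_cons. unfold bid_factor. destruct (act k); lra.
Qed.

Lemma prof_prob_nonneg Q act a k : (forall j, 0 <= Q j <= 1) -> 0 <= prof_prob Q act a k.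
Proof.
  intros HQ; revert k; induction a; intros k; simpl; [lra|].
  apply Rmult_le_pos; auto. destruct (act k), a; specialize (HQ k); lra.
Qed.

Lemma prof_prob_ext Q1 Q2 act a k : (forall j, (k <= j)%nat -> Q1 j = Q2 j) ->
  prof_prob Q1 act a k = prof_prob Q2 act a k.
Proof.
  revert k; induction a; intros k H; simpl; auto.
  rewrite (IHa (S k)) by (intros; apply H; lia). rewrite H by lia. reflexivity.
Qed.

Definition with_prob (Q : nat -> R) (i : nat) (x : R) : nat -> R :=
  fun j => if Nat.eqb j i then x else Q j.

Lemma prof_prob_affine Q i x act a k :
  prof_prob (with_prob Q i x) act a k
  = x * prof_prob (with_prob Q i 1) act a k + (1 - x) * prof_prob (with_prob Q i 0) act a k.
Proof.
  revert k; induction a as [|b a IH]; intros k; simpl; [lra|].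
  destruct (Nat.eqb_spec k i) as [->|Hk].
  - assert (Later : forall y z, prof_prob (with_prob Q i y) act a (S i)
                               = prof_prob (with_prob Q i z) act a (S i)).
    { intros y z. apply prof_prob_ext. intros j Hj. unfold with_prob.
      destruct (Nat.eqb_spec j i); [lia|auto]. }
    rewrite (Later x 1), (Later 0 1). unfold with_prob. rewrite Nat.eqb_refl.
    destruct (act i), b; lra.
  - rewrite IH. unfold with_prob. destruct (Nat.eqb_spec k i); [lia|]. lra.
Qed.

Lemma prof_prob_zero Q act i a k : (k <= i)%nat -> (i - k < length a)%nat ->
  bid_factor Q act i (nth (i - k) a false) = 0 -> prof_prob Q act a k = 0.
Proof.
  revert k; induction a as [|b a IH]; intros k Hk Hl Hf; simpl in *; [lia|].
  destruct (Nat.eq_dec k i) as [->|Hne].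
  - rewrite Nat.sub_diag in Hf. simpl in Hf. unfold bid_factor in Hf. rewrite Hf. lra.
  - rewrite (IH (S k)); [lra|lia|lia|].
    replace (i - k)%nat with (S (i - S k)) in Hf by lia. exact Hf.
Qed.

Lemma nth_true_lt (a : profile) j : nth j a false = true -> (j < length a)%nat.
Proof.
  intros H. destruct (Nat.lt_ge_cases j (length a)); auto.
  rewrite nth_overflow in H; [discriminate|auto].
Qed.

Lemma prof_prob_bid_zero Q act i a : bids a i = true ->
  bid_factor Q act i true = 0 -> prof_prob Q act a 0 = 0.
Proof.
  intros Hb Hf. apply (prof_prob_zero Q act i a 0); rewrite ?Nat.sub_0_r; [lia|apply nth_true_lt; exact Hb|].
  unfold bids in Hb. rewrite Hb. exact Hf.
Qed.

Lemma prof_prob_map Q act f l k :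
  prof_prob Q act (map f (seq k l)) k
  = fold_right Rmult 1 (map (fun m => bid_factor Q act m (f m)) (seq k l)).
Proof. revert k; induction l; intros k; simpl; auto. rewrite IHl. reflexivity. Qed.

(** * CARA utility *)

Lemma util_0 rho : util rho 0 = 0.
Proof. unfold util. destruct (Req_EM_T rho 0); auto. rewrite Rmult_0_r, exp_0. field; auto. Qed.

Lemma util_shift rho w x : util rho (w + x) = util rho w + exp (- rho * w) * util rho x.
Proof.
  unfold util. destruct (Req_EM_T rho 0) as [->|H].
  - rewrite Ropp_0, Rmult_0_l, exp_0. lra.
  - replace (- rho * (w + x)) with (- rho * w + - rho * x) by ring. rewrite exp_plus. field; auto.
Qed.

Lemma util_lt rho x y : rho <= 0 -> x < y -> util rho x < util rho y.
Proof.
  intros Hr Hxy. unfold util. destruct (Req_EM_T rho 0) as [->|H]; auto.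
  assert (Hneg : rho < 0) by lra.
  assert (exp (- rho * x) < exp (- rho * y)) by (apply exp_increasing; nra).
  apply (Rmult_lt_reg_r (- rho)); [lra|].
  replace ((1 - exp (- rho * x)) / rho * - rho) with (exp (- rho * x) - 1) by (field; auto).
  replace ((1 - exp (- rho * y)) / rho * - rho) with (exp (- rho * y) - 1) by (field; auto). lra.
Qed.

Lemma util_le rho x y : rho <= 0 -> x <= y -> util rho x <= util rho y.
Proof. intros Hr [H|E]; [left; apply util_lt; auto|subst; lra]. Qed.

Lemma util_pos rho x : rho <= 0 -> 0 < x -> 0 < util rho x.
Proof. intros. rewrite <- (util_0 rho). apply util_lt; auto. Qed.

Lemma cara_indifference rho w c g p : rho <= 0 -> 0 < g ->
  util rho w = p * util rho (w - c + g) + (1 - p) * util rho (w - c) ->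
  p = util rho c / util rho g.
Proof.
  intros Hr Hg E.
  replace (w - c + g) with (w + (- c + g)) in E by ring.
  replace (w - c) with (w + - c) in E by ring.
  rewrite !(util_shift rho w) in E.
  assert (E2 : exp (- rho * w) * (p * util rho (- c + g) + (1 - p) * util rho (- c))
               = exp (- rho * w) * 0) by lra.
  apply Rmult_eq_reg_l in E2; [|apply Rgt_not_eq, exp_pos].
  assert (U2 : util rho (- c) = - (exp (- rho * - c) * util rho c)).
  { pose proof (util_shift rho (- c) c) as U. replace (- c + c) with 0 in U by ring.
    rewrite util_0 in U. lra. }
  rewrite util_shift, U2 in E2.
  assert (E3 : exp (- rho * - c) * (p * util rho g - util rho c) = exp (- rho * - c) * 0) by lra.
  apply Rmult_eq_reg_l in E3; [|apply Rgt_not_eq, exp_pos].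
  assert (0 < util rho g) by (apply util_pos; auto).
  field_simplify_eq; lra.
Qed.

Lemma ended_app h a : ended (h ++ [a]) = ended h || Nat.eqb (nbidders a) 1.
Proof. unfold ended. rewrite existsb_app. simpl. rewrite orb_false_r. reflexivity. Qed.

Lemma won_app i h a : won i (h ++ [a]) = won i h || (Nat.eqb (nbidders a) 1 && bids a i).
Proof. unfold won. rewrite existsb_app. simpl. rewrite orb_false_r. reflexivity. Qed.

Lemma nonended_not_won i h : ended h = false -> won i h = false.
Proof.
  unfold won, ended. intros H. apply not_true_is_false. intros W.
  apply existsb_exists in W as [x [Hx Hw]]. apply andb_true_iff in Hw as [Hw _].
  assert (existsb (fun a => Nat.eqb (nbidders a) 1) h = true) by (apply existsb_exists; eauto).
  congruence.
Qed.

Lemma wealth_app c v s i h a : wealth c v s i (h ++ [a]) =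
  wealth c v s i h - c * (if bids a i then 1 else 0)
  + ((if won i (h ++ [a]) then v - s else 0) - (if won i h then v - s else 0)).
Proof.
  unfold wealth. rewrite filter_app, length_app. simpl. rewrite plus_INR.
  destruct (bids a i); simpl; lra.
Qed.

Lemma wealth_nobid c v s i h a : won i h = false -> bids a i = false ->
  wealth c v s i (h ++ [a]) = wealth c v s i h /\ won i (h ++ [a]) = false.
Proof.
  intros Hw Hb. rewrite wealth_app, won_app, Hw, Hb, andb_false_r. simpl. split; [lra|auto].
Qed.

Lemma wealth_bid c v s i h a : won i h = false -> bids a i = true ->
  wealth c v s i (h ++ [a]) = wealth c v s i h - c + (if Nat.eqb (nbidders a) 1 then v - s else 0)
  /\ won i (h ++ [a]) = Nat.eqb (nbidders a) 1.
Proof.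
  intros Hw Hb. rewrite wealth_app, won_app, Hw, Hb, andb_true_r. simpl. split; [|auto].
  destruct (Nat.eqb (nbidders a) 1); lra.
Qed.

Lemma active_app n reentry h a i : active n reentry (h ++ [a]) i =
  Nat.ltb i n && active_step reentry (fold_left (active_step reentry) h (fun _ => true)) a i.
Proof. unfold active. rewrite fold_left_app. reflexivity. Qed.

Lemma active_lt n reentry h i : active n reentry h i = true -> (i < n)%nat.
Proof. unfold active. intros H. apply andb_true_iff in H as [H _]. apply Nat.ltb_lt; auto. Qed.

Lemma active_reentry n h i : active n true h i = Nat.ltb i n.
Proof.
  unfold active. replace (fold_left (active_step true) h (fun _ => true)) with (fun _ : nat => true).
  - apply andb_true_r.
  - induction h as [|x h IH] using rev_ind; auto. rewrite fold_left_app, <- IH. reflexivity.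
Qed.

Lemma inactive_child n reentry h a i : active n reentry h i = false -> bids a i = false ->
  active n reentry (h ++ [a]) i = false.
Proof.
  rewrite active_app. unfold active. intros H Hb.
  destruct (Nat.ltb i n); simpl in *; auto. unfold active_step.
  destruct reentry; auto. destruct (Nat.eqb (nbidders a) 0); auto.
Qed.

Lemma bid_child_active n reentry h a i : active n reentry h i = true -> bids a i = true ->
  active n reentry (h ++ [a]) i = true.
Proof.
  rewrite active_app. unfold active. intros H Hb. apply andb_true_iff in H as [H1 H2].
  rewrite H1. simpl. unfold active_step. destruct reentry; auto.
  destruct (Nat.eqb (nbidders a) 0); auto.
Qed.

Lemma nobid_same_active n reentry h a i : Nat.eqb (nbidders a) 0 = true ->
  active n reentry (h ++ [a]) i = active n reentry h i.
Proof.
  intros H. rewrite active_app. unfold active, active_step. rewrite H. destruct reentry; auto.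
Qed.

Lemma nbidders_cons b a : nbidders (b :: a) = ((if b then 1 else 0) + nbidders a)%nat.
Proof. unfold nbidders. destruct b; reflexivity. Qed.

Lemma nbidders_ge1 a i : nth i a false = true -> (1 <= nbidders a)%nat.
Proof.
  revert i; induction a as [|b a IH]; intros i H; [destruct i; discriminate|].
  rewrite nbidders_cons. destruct i; simpl in H.
  - subst. lia.
  - specialize (IH i H). destruct b; lia.
Qed.

Lemma nbidders_ge2 a i j : i <> j -> nth i a false = true -> nth j a false = true ->
  (2 <= nbidders a)%nat.
Proof.
  revert i j; induction a as [|b a IH]; intros i j Hij Hi Hj; [destruct i; discriminate|].
  rewrite nbidders_cons. destruct i, j; simpl in *; try lia.
  - subst. pose proof (nbidders_ge1 a j Hj). lia.
  - subst. pose proof (nbidders_ge1 a i Hi). lia.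
  - specialize (IH i j ltac:(lia) Hi Hj). destruct b; lia.
Qed.

Lemma nbidders_zero a : (forall j, nth j a false = false) -> nbidders a = 0%nat.
Proof.
  induction a as [|b a IH]; intros H; auto. rewrite nbidders_cons.
  pose proof (H 0%nat) as H0. simpl in H0. subst. rewrite IH; auto. intros j. apply (H (S j)).
Qed.

Lemma nbidders_le1 a i : (forall j, nth j a false = true -> j = i) -> (nbidders a <= 1)%nat.
Proof.
  revert i; induction a as [|b a IH]; intros i H; [unfold nbidders; simpl; lia|].
  rewrite nbidders_cons.
  assert (TailSilent : (forall j, nth (S j) (b :: a) false = true -> S j = 0%nat) -> nbidders a = 0%nat).
  { intros Hk. apply nbidders_zero. intros j. destruct (nth j a false) eqn:E; auto.
    discriminate (Hk j E). }
  destruct b.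
  - assert (i = 0%nat) by (symmetry; apply (H 0%nat); reflexivity). subst.
    rewrite TailSilent; [lia|]. intros j. apply H.
  - destruct i as [|i].
    + rewrite TailSilent; [lia|]. intros j. apply H.
    + assert (nbidders a <= 1)%nat; [|lia]. apply (IH i). intros j Hj.
      specialize (H (S j) Hj). lia.
Qed.

Lemma another_bidder a i : (2 <= nbidders a)%nat -> exists j, j <> i /\ nth j a false = true.
Proof.
  intros H. destruct (Classical_Prop.classic (exists j, j <> i /\ nth j a false = true)) as [E|E]; auto.
  exfalso. assert (nbidders a <= 1)%nat; [|lia]. apply (nbidders_le1 a i). intros j Hj.
  destruct (Nat.eq_dec j i); auto. exfalso. apply E. eauto.
Qed.

(** In a reachable, non-ended history every active player has an active rival:
    without re-entry the active players are the (at least two) last bidders. *)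
Lemma other_active n reentry h i : (2 <= n)%nat -> valid_history n reentry h -> ended h = false ->
  active n reentry h i = true -> exists j, j <> i /\ active n reentry h j = true.
Proof.
  intros Hn Hv. induction Hv as [|h a Hv IH He Hl Hb]; intros Hne Hi.
  - exists (if Nat.eqb i 0 then 1%nat else 0%nat). unfold active. simpl.
    destruct (Nat.eqb_spec i 0); split; try lia; rewrite andb_true_r; apply Nat.ltb_lt; lia.
  - rewrite ended_app in Hne. apply orb_false_iff in Hne as [He1 Hne].
    destruct (Nat.eqb (nbidders a) 0) eqn:E0.
    + rewrite nobid_same_active in Hi by auto. destruct (IH He1 Hi) as [j [Hj1 Hj2]].
      exists j. rewrite nobid_same_active by auto. auto.
    + destruct reentry.
      * exists (if Nat.eqb i 0 then 1%nat else 0%nat). rewrite active_reentry.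
        destruct (Nat.eqb_spec i 0); split; try lia; apply Nat.ltb_lt; lia.
      * apply Nat.eqb_neq in E0, Hne.
        destruct (another_bidder a i) as [j [Hj1 Hj2]]; [lia|]. exists j. split; auto.
        rewrite active_app. unfold active_step. apply Nat.eqb_neq in E0. rewrite E0. simpl.
        apply andb_true_iff. split; auto. apply Nat.ltb_lt. apply nth_true_lt in Hj2. lia.
Qed.

Definition onlyp (n j : nat) : profile := map (fun m => Nat.eqb m j) (seq 0 n).

Lemma onlyp_length n j : length (onlyp n j) = n.
Proof. unfold onlyp. rewrite length_map, length_seq. auto. Qed.

Lemma nth_onlyp n j m : nth m (onlyp n j) false = (Nat.ltb m n && Nat.eqb m j).
Proof.
  unfold onlyp. destruct (Nat.ltb_spec m n).
  - rewrite (nth_indep _ false ((fun m => Nat.eqb m j) 0%nat)) by (rewrite length_map, length_seq; auto).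
    rewrite (map_nth (fun m => Nat.eqb m j) (seq 0 n) 0%nat m), seq_nth by auto. reflexivity.
  - rewrite nth_overflow; auto. rewrite length_map, length_seq; auto.
Qed.

Lemma bids_onlyp n j : (j < n)%nat -> bids (onlyp n j) j = true.
Proof. intros H. unfold bids. rewrite nth_onlyp, Nat.eqb_refl, andb_true_r. apply Nat.ltb_lt; auto. Qed.

Lemma nbidders_onlyp n j : (j < n)%nat -> nbidders (onlyp n j) = 1%nat.
Proof.
  intros H. apply Nat.le_antisymm.
  - apply (nbidders_le1 _ j). intros m. rewrite nth_onlyp. intros E.
    apply andb_true_iff in E as [_ E]. apply Nat.eqb_eq; auto.
  - apply (nbidders_ge1 _ j), bids_onlyp; auto.
Qed.

Lemma single_bidder_eq n a i : length a = n -> bids a i = true -> nbidders a = 1%nat ->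
  a = onlyp n i.
Proof.
  intros Hl Hb Hnb. unfold bids in Hb. apply nth_ext with (d := false) (d' := false).
  - rewrite onlyp_length; auto.
  - intros m Hm. rewrite nth_onlyp. rewrite Hl in Hm. apply Nat.ltb_lt in Hm as Hm'. rewrite Hm'. simpl.
    destruct (Nat.eqb_spec m i) as [->|Hne]; auto.
    destruct (nth m a false) eqn:E; auto. pose proof (nbidders_ge2 a i m ltac:(auto) Hb E). lia.
Qed.

Lemma Un_cv_const (k : R) : Un_cv (fun _ => k) k.
Proof. intros eps He. exists 0%nat. intros. unfold Rdist. rewrite Rminus_diag, Rabs_R0. lra. Qed.

Lemma Un_cv_shift u l : Un_cv u l -> Un_cv (fun T => u (S T)) l.
Proof. intros H eps He. destruct (H eps He) as [N HN]. exists N. intros m Hm. apply HN. lia. Qed.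

Lemma Un_cv_sum L (w : profile -> R) (F : profile -> nat -> R) (l : profile -> R) :
  (forall a, In a L -> w a = 0 \/ Un_cv (F a) (l a)) ->
  Un_cv (fun T => lsum L (fun a => w a * F a T)) (lsum L (fun a => w a * l a)).
Proof.
  induction L as [|x L IH]; intros H.
  - unfold lsum; simpl. apply Un_cv_const.
  - unfold lsum in *; simpl. apply CV_plus.
    + destruct (H x (or_introl eq_refl)) as [E|E].
      * rewrite E. intros eps He. exists 0%nat. intros. unfold Rdist.
        rewrite !Rmult_0_l, Rminus_diag, Rabs_R0. lra.
      * apply CV_mult; [apply Un_cv_const|auto].
    + apply IH. intros; apply H; right; auto.
Qed.

Lemma lim_le_eps u l K : Un_cv u l ->
  (forall eps, eps > 0 -> exists N, forall T, (T >= N)%nat -> u T <= K + eps) -> l <= K.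
Proof.
  intros Hc H. destruct (Rle_or_lt l K) as [|Hlt]; auto. exfalso.
  set (e := (l - K) / 2). assert (He : e > 0) by (unfold e; lra).
  destruct (H e He) as [N1 H1]. destruct (Hc e He) as [N2 H2].
  specialize (H1 (max N1 N2) ltac:(lia)). specialize (H2 (max N1 N2) ltac:(lia)).
  unfold Rdist in H2. apply Rabs_def2 in H2. unfold e in *. lra.
Qed.

Lemma lim_le u l K : Un_cv u l -> (forall T, u T <= K) -> l <= K.
Proof.
  intros Hc H. apply (lim_le_eps u); auto. intros eps He. exists 0%nat. intros T _.
  specialize (H T). lra.
Qed.

Lemma sup_approx (P : R -> Prop) (B x0 : R) : P x0 -> (forall x, P x -> x <= B) ->
  exists S, (forall x, P x -> x <= S) /\ forall eps, 0 < eps -> exists x, P x /\ S - eps < x.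
Proof.
  intros H0 HB. destruct (completeness P) as [S [Hub Hleast]]; [exists B; exact HB|exists x0; auto|].
  exists S. split; [exact Hub|]. intros eps Heps.
  apply Classical_Prop.NNPP. intros Hn.
  assert (is_upper_bound P (S - eps)).
  { intros x Hx. apply Rnot_lt_le. intros Hlt. apply Hn. exists x. auto. }
  specialize (Hleast _ H). lra.
Qed.

(** The limit of a sequence, chosen classically (0 if there is none). *)
Definition limv (u : nat -> R) : R :=
  match excluded_middle_informative (exists l, Un_cv u l) with
  | left H => proj1_sig (constructive_indefinite_description _ H)
  | right _ => 0
  end.

Lemma limv_spec u l : Un_cv u l -> limv u = l.
Proof.
  intros H. unfold limv. destruct (excluded_middle_informative _) as [E|E].
  - destruct (constructive_indefinite_description _ E) as [l' Hl']. simpl. eapply UL_sequence; eauto.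
  - exfalso; apply E; eauto.
Qed.

Section ExpectedUtility.
Variables (n : nat) (reentry : bool) (rho c v s : R).

Definition prob (sg : strategy_profile) (h : history) (a : profile) : R :=
  prof_prob (fun j => sg j h) (active n reentry h) a 0.

Lemma prob_sum sg h : lsum (all_profiles n) (fun a => prob sg h a) = 1.
Proof. apply prof_prob_sum. Qed.

Lemma prob_sum_const sg h K : lsum (all_profiles n) (fun a => prob sg h a * K) = K.
Proof. rewrite (lsum_ext _ _ (fun a => K * prob sg h a)) by (intros; lra). rewrite lsum_scal, prob_sum. lra. Qed.

Lemma prob_nonneg sg h a : valid_profile sg -> 0 <= prob sg h a.
Proof. intros H. apply prof_prob_nonneg. intros j. apply H. Qed.

Lemma EU_ended sg i h T : ended h = true -> EU n reentry rho c v s sg i h T = util rho (wealth c v s i h).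
Proof. intros H. destruct T; simpl; auto. rewrite H. auto. Qed.

Lemma EU_step sg i h T : ended h = false -> EU n reentry rho c v s sg i h (S T) =
  lsum (all_profiles n) (fun a => prob sg h a * EU n reentry rho c v s sg i (h ++ [a]) T).
Proof. intros H. simpl. rewrite H. reflexivity. Qed.

Lemma EU_ext sg1 sg2 i T : forall h, (forall j e, sg1 j (h ++ e) = sg2 j (h ++ e)) ->
  EU n reentry rho c v s sg1 i h T = EU n reentry rho c v s sg2 i h T.
Proof.
  induction T; intros h H; simpl; auto. destruct (ended h); auto.
  f_equal. apply map_ext. intros a. f_equal.
  - apply prof_prob_ext. intros j _. specialize (H j nil). rewrite app_nil_r in H. auto.
  - apply IHT. intros j e. rewrite <- app_assoc. apply H.
Qed.

Lemma EU_never_bid sg i (P : history -> Prop) :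
  (forall h a, P h -> bids a i = true -> prob sg h a = 0) ->
  (forall h a, P h -> bids a i = false -> P (h ++ [a])) ->
  forall T h, won i h = false -> P h -> EU n reentry rho c v s sg i h T = util rho (wealth c v s i h).
Proof.
  intros H1 H2. induction T; intros h Hw HP; [simpl; auto|].
  destruct (ended h) eqn:E; [rewrite EU_ended; auto|rewrite EU_step by auto].
  rewrite (lsum_ext _ _ (fun a => prob sg h a * util rho (wealth c v s i h))).
  - apply prob_sum_const.
  - intros a _. destruct (bids a i) eqn:B.
    + rewrite H1 by auto. lra.
    + destruct (wealth_nobid c v s i h a Hw B) as [W1 W2]. rewrite IHT, W1; auto.
Qed.

Definition best_wealth i h := wealth c v s i h + (if won i h then 0 else v - s).

Lemma EU_upper sg i : valid_profile sg -> rho <= 0 -> 0 <= c -> 0 <= v - s ->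
  forall T h, EU n reentry rho c v s sg i h T <= util rho (best_wealth i h).
Proof.
  intros Hv Hr Hc Hvs. induction T; intros h.
  - simpl. apply util_le; auto. unfold best_wealth. destruct (won i h); lra.
  - destruct (ended h) eqn:E.
    + rewrite EU_ended by auto. apply util_le; auto. unfold best_wealth. destruct (won i h); lra.
    + rewrite EU_step by auto. rewrite <- (prob_sum_const sg h (util rho (best_wealth i h))).
      apply lsum_le. intros a _. apply Rmult_le_compat_l; [apply prob_nonneg; auto|].
      eapply Rle_trans; [apply IHT|]. apply util_le; auto.
      pose proof (nonended_not_won i h E) as Hw. unfold best_wealth. rewrite Hw.
      destruct (bids a i) eqn:B.
      * destruct (wealth_bid c v s i h a Hw B) as [W1 W2]. rewrite W1, W2.
        destruct (Nat.eqb (nbidders a) 1); lra.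
      * destruct (wealth_nobid c v s i h a Hw B) as [W1 W2]. rewrite W1, W2. lra.
Qed.

End ExpectedUtility.

(** * The one-round potential inequality *)

(** The least winning probability [g/(2(M+g))] that makes bidding worthwhile
    when bidding loses [g] and winning gains at most [M]. *)
Definition min_win (M g : R) : R := g / (2 * (M + g)).

Definition potential_const (M g R0 : R) : R :=
  2 * (2 / g + 1 / R0 + 1 / (min_win M g * min_win M g * R0)).

Lemma potential_const_bounds M g R0 : 0 < M -> 0 < g -> 0 < R0 ->
  let K := potential_const M g R0 / 2 in
  K * R0 >= 1 /\ K * g >= 2 /\ K * (min_win M g * min_win M g * R0) >= 1.
Proof.
  intros HM Hg HR K.
  assert (Hp0 : 0 < min_win M g) by (unfold min_win; apply Rdiv_lt_0_compat; lra).
  assert (A : 0 < 2 / g) by (apply Rdiv_lt_0_compat; lra).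
  assert (B : 0 < 1 / R0) by (apply Rdiv_lt_0_compat; lra).
  assert (Hpp : 0 < min_win M g * min_win M g * R0) by (apply Rmult_lt_0_compat; [nra|lra]).
  assert (C : 0 < 1 / (min_win M g * min_win M g * R0)) by (apply Rdiv_lt_0_compat; lra).
  assert (EK : K = 2 / g + 1 / R0 + 1 / (min_win M g * min_win M g * R0))
    by (unfold K, potential_const; field; repeat split; lra).
  rewrite EK. repeat split.
  - assert (1 / R0 * R0 = 1) by (field; lra). nra.
  - assert (2 / g * g = 2) by (field; lra). nra.
  - assert (1 / (min_win M g * min_win M g * R0) * (min_win M g * min_win M g * R0) = 1)
      by (field; lra). nra.
Qed.

Lemma potential_const_pos M g R0 : 0 < M -> 0 < g -> 0 < R0 -> 0 < potential_const M g R0.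
Proof. intros HM Hg HR. destruct (potential_const_bounds M g R0 HM Hg HR) as [H _]. nra. Qed.

(** A player bids
    with probability [q]; if she does not bid she keeps her place with
    probability [s] and then loses an expected deficit [SDn]; [delta] is her
    current deficit to the supremum [R0] of rents; [p <= 1 - q] is her winning
    probability when bidding, which gains at most [M] and otherwise loses [g];
    and the rival bidding alone makes her leave ([q * p <= 1 - s]).  Then
    leaving probability plus [K] times the expected future deficit is at most
    [K] times the present deficit. *)
Lemma one_round_potential (q s SDn delta R0 p M g : R) :
  0 <= q <= 1 -> 0 <= s <= 1 -> 0 <= delta -> 0 < R0 -> 0 < M -> 0 < g -> 0 <= p -> p <= 1 - q ->
  (q < 1 -> R0 - delta = R0 * s - SDn) ->
  (0 < q -> R0 - delta <= p * M + (1 - p) * (R0 - g)) ->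
  q * p <= 1 - s ->
  1 - (1 - q) * s + potential_const M g R0 * ((1 - q) * SDn) <= potential_const M g R0 * delta.
Proof.
  intros Hq Hs Hd HR HM Hg Hp0 Hp1 Hnobid Hbid Hexit.
  destruct (potential_const_bounds M g R0 HM Hg HR) as [HK1 [HKg HKp]].
  set (p0 := min_win M g) in *. set (K := potential_const M g R0 / 2) in *.
  replace (potential_const M g R0) with (2 * K) by (unfold K; field).
  assert (Hp0pos : 0 < p0) by (unfold p0, min_win; apply Rdiv_lt_0_compat; lra).
  assert (HK0 : 0 < K) by nra.
  destruct (Req_dec q 1) as [Eq1|Nq1].
  - subst q. replace p with 0 in Hbid by lra. specialize (Hbid ltac:(lra)).
    assert (delta >= g) by lra. nra.
  - assert (Hq1 : q < 1) by lra. specialize (Hnobid Hq1).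
    assert (ESD : SDn = delta - (1 - s) * R0) by lra. rewrite ESD.
    assert (A1 : (1 - q) * (1 - s) <= K * ((1 - q) * (1 - s) * R0)).
    { assert (0 <= (1 - q) * (1 - s)) by nra. nra. }
    assert (A2 : q <= K * (q * delta + (1 - q) * (1 - s) * R0)).
    { assert (0 <= (1 - q) * (1 - s) * R0) by (apply Rmult_le_pos; nra).
      destruct (Req_dec q 0) as [->|Nq0]; [nra|].
      assert (Hqp : 0 < q) by lra.
      destruct (Rle_or_lt (g / 2) delta) as [Hdg|Hdg].
      - assert (q * delta >= q * (g / 2)) by nra.
        assert (K * (q * (g / 2)) >= q) by nra. nra.
      - (* a small deficit forces a winning probability of at least [p0] *)
        specialize (Hbid Hqp).
        assert (Hpm : p * (M - R0 + g) >= g / 2) by nra.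
        assert (Hpp : p >= p0).
        { unfold p0, min_win. destruct (Rle_or_lt (M - R0 + g) 0) as [Hn|Hn].
          - assert (p * (M - R0 + g) <= 0) by nra. lra.
          - apply Rle_ge. unfold Rdiv. apply (Rmult_le_reg_r (2 * (M + g))); [lra|].
            rewrite Rmult_assoc, Rinv_l, Rmult_1_r by lra. nra. }
        assert (E1 : 1 - q >= p0) by lra.
        assert (E2 : 1 - s >= q * p0) by nra.
        assert (E3 : (1 - q) * (1 - s) >= p0 * (q * p0)) by nra.
        assert (E4 : (1 - q) * (1 - s) * R0 >= q * (p0 * p0 * R0)) by nra.
        assert (K * ((1 - q) * (1 - s) * R0) >= q) by nra.
        assert (0 <= q * delta) by nra. nra. }
    assert (0 <= q * delta) by nra.
    assert (0 <= (1 - q) * (1 - s) * R0) by (apply Rmult_le_pos; nra).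
    nra.
Qed.

(** * Values and rents in a symmetric subgame perfect equilibrium *)

Section Equilibrium.
Variables (n : nat) (reentry : bool) (rho c v s : R) (sigma : strategy_profile).
Hypothesis Hn : (2 <= n)%nat.
Hypothesis Hc : 0 < c.
Hypothesis Hcvs : c < v - s.
Hypothesis Hr : rho <= 0.
Hypothesis Hspe : is_SPE n reentry rho c v s sigma.
Hypothesis Hsym : symmetric n reentry sigma.

Definition EUs i h := EU n reentry rho c v s sigma i h.
Definition value i h := limv (EUs i h).
Definition act h := active n reentry h.
Definition Pr h a := prob n reentry sigma h a.
Definition dev_prob h i x a := prof_prob (with_prob (fun j => sigma j h) i x) (act h) a 0.

Lemma sigma_valid : valid_profile sigma.
Proof. destruct Hspe; auto. Qed.

Lemma value_eq i h l : Un_cv (EUs i h) l -> value i h = l.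
Proof. apply limv_spec. Qed.

Lemma EUs_ended_cv i h : ended h = true -> Un_cv (EUs i h) (util rho (wealth c v s i h)).
Proof.
  intros E eps He. exists 0%nat. intros T _. unfold EUs. rewrite EU_ended by auto.
  unfold Rdist. rewrite Rminus_diag, Rabs_R0. lra.
Qed.

Lemma value_ended i h : ended h = true -> value i h = util rho (wealth c v s i h).
Proof. intros E. apply value_eq, EUs_ended_cv, E. Qed.

Lemma value_cv i h : valid_history n reentry h -> (i < n)%nat -> Un_cv (EUs i h) (value i h).
Proof.
  intros Hv Hi. destruct (ended h) eqn:E.
  - rewrite value_ended by auto. apply EUs_ended_cv, E.
  - destruct Hspe as [_ H]. destruct (H h Hv E i Hi) as [V [HV _]].
    rewrite (value_eq i h _ HV). auto.
Qed.

Lemma bidders_active Q h a : prof_prob Q (act h) a 0 <> 0 -> forall j, bids a j = true -> act h j = true.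
Proof.
  intros H j Hb. destruct (act h j) eqn:E; auto. exfalso. apply H.
  apply (prof_prob_bid_zero Q (act h) j a Hb). unfold bid_factor. rewrite E. auto.
Qed.

Lemma child_valid Q h a : valid_history n reentry h -> ended h = false -> In a (all_profiles n) ->
  prof_prob Q (act h) a 0 <> 0 -> valid_history n reentry (h ++ [a]).
Proof.
  intros Hv He Ha HP. constructor; auto.
  - apply all_profiles_length; auto.
  - apply (bidders_active Q); auto.
Qed.

Lemma child_cv Q i h a : valid_history n reentry h -> ended h = false -> (i < n)%nat ->
  In a (all_profiles n) ->
  prof_prob Q (act h) a 0 = 0 \/ Un_cv (EUs i (h ++ [a])) (value i (h ++ [a])).
Proof.
  intros. destruct (Req_dec (prof_prob Q (act h) a 0) 0); auto. right.
  apply value_cv; auto. eapply child_valid; eauto.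
Qed.

Lemma value_decomp i h : valid_history n reentry h -> ended h = false -> (i < n)%nat ->
  value i h = lsum (all_profiles n) (fun a => Pr h a * value i (h ++ [a])).
Proof.
  intros Hv He Hi. pose proof (Un_cv_shift _ _ (value_cv i h Hv Hi)) as H.
  assert (H2 : Un_cv (fun T => lsum (all_profiles n) (fun a => Pr h a * EUs i (h ++ [a]) T))
                     (lsum (all_profiles n) (fun a => Pr h a * value i (h ++ [a])))).
  { apply Un_cv_sum. intros a Ha. apply (child_cv (fun j => sigma j h)); auto. }
  eapply UL_sequence; [exact H|]. intros eps Heps. destruct (H2 eps Heps) as [N HN].
  exists N. intros m Hm. unfold EUs in *. rewrite EU_step by auto. apply HN; auto.
Qed.

Definition one_shot i h x : history -> R :=
  fun h' => if list_eq_dec (list_eq_dec bool_dec) h' h then x else sigma i h'.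

Lemma one_shot_step i h x T : ended h = false ->
  EU n reentry rho c v s (deviate sigma i (one_shot i h x)) i h (S T) =
  lsum (all_profiles n) (fun a => dev_prob h i x a * EUs i (h ++ [a]) T).
Proof.
  intros He. rewrite EU_step by auto. apply lsum_ext. intros a _. f_equal.
  - unfold prob, dev_prob. apply prof_prob_ext. intros j _. unfold deviate, with_prob, one_shot.
    destruct (Nat.eqb j i); auto. destruct (list_eq_dec (list_eq_dec bool_dec) h h); tauto.
  - unfold EUs. apply EU_ext. intros j e. unfold deviate, one_shot.
    destruct (Nat.eqb_spec j i); auto. subst. destruct (list_eq_dec (list_eq_dec bool_dec) _ h) as [E|]; auto.
    exfalso. assert (E2 : h ++ ([a] ++ e) = h ++ []) by (rewrite app_nil_r, app_assoc; exact E).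
    apply app_inv_head in E2. discriminate.
Qed.

Lemma one_shot_le i h x : valid_history n reentry h -> ended h = false -> (i < n)%nat -> 0 <= x <= 1 ->
  lsum (all_profiles n) (fun a => dev_prob h i x a * value i (h ++ [a])) <= value i h.
Proof.
  intros Hv He Hi Hx. destruct Hspe as [_ H]. destruct (H h Hv He i Hi) as [V [HV Hdev]].
  rewrite (value_eq i h V HV).
  assert (Htau : forall h', 0 <= one_shot i h x h' <= 1).
  { intros h'. unfold one_shot. destruct (list_eq_dec (list_eq_dec bool_dec) _ _); auto. apply sigma_valid. }
  specialize (Hdev (one_shot i h x) Htau).
  assert (H2 : Un_cv (fun T => lsum (all_profiles n) (fun a => dev_prob h i x a * EUs i (h ++ [a]) T))
                     (lsum (all_profiles n) (fun a => dev_prob h i x a * value i (h ++ [a])))).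
  { apply Un_cv_sum. intros a Ha. apply child_cv; auto. }
  apply (lim_le_eps _ _ V H2). intros eps Heps. destruct (Hdev eps Heps) as [N HN].
  exists N. intros T HT. rewrite <- one_shot_step by auto. apply HN. lia.
Qed.

(** Never bidding again secures the current wealth. *)
Lemma value_ge_wealth i h : valid_history n reentry h -> ended h = false -> (i < n)%nat ->
  util rho (wealth c v s i h) <= value i h.
Proof.
  intros Hv He Hi. destruct Hspe as [_ H]. destruct (H h Hv He i Hi) as [V [HV Hdev]].
  rewrite (value_eq i h V HV).
  specialize (Hdev (fun _ => 0) ltac:(intros; lra)).
  assert (Hc0 : forall T, EU n reentry rho c v s (deviate sigma i (fun _ => 0)) i h T
                          = util rho (wealth c v s i h)).
  { intros T. apply (EU_never_bid n reentry rho c v s _ i (fun _ => True)); auto.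
    - intros h' a _ Hb. apply (prof_prob_bid_zero _ _ i a Hb).
      unfold bid_factor, deviate. rewrite Nat.eqb_refl. destruct (active n reentry h' i); auto.
    - apply nonended_not_won; auto. }
  apply (lim_le_eps (fun _ => util rho (wealth c v s i h))); [apply Un_cv_const|].
  intros eps Heps. destruct (Hdev eps Heps) as [N HN]. exists N. intros T HT.
  specialize (HN T HT). rewrite Hc0 in HN. exact HN.
Qed.

Lemma value_le_prize i h : valid_history n reentry h -> ended h = false -> (i < n)%nat ->
  value i h <= util rho (wealth c v s i h + (v - s)).
Proof.
  intros Hv He Hi. apply (lim_le (EUs i h)); [apply value_cv; auto|]. intros T. unfold EUs.
  eapply Rle_trans; [apply (EU_upper n reentry rho c v s sigma i sigma_valid Hr); lra|].
  unfold best_wealth. rewrite nonended_not_won by auto. lra.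
Qed.

(** The rent of player [i] at [h]: her value in excess of her current wealth,
    normalized by CARA so that it does not depend on that wealth. *)
Definition rent i h := (value i h - util rho (wealth c v s i h)) * exp (rho * wealth c v s i h).

Lemma value_rent i h :
  value i h = util rho (wealth c v s i h) + exp (- rho * wealth c v s i h) * rent i h.
Proof.
  unfold rent. set (w := wealth c v s i h).
  replace (exp (- rho * w) * ((value i h - util rho w) * exp (rho * w)))
    with ((value i h - util rho w) * (exp (- rho * w) * exp (rho * w))) by ring.
  rewrite <- exp_plus. replace (- rho * w + rho * w) with 0 by ring. rewrite exp_0. ring.
Qed.

Lemma rent_nonneg i h : valid_history n reentry h -> ended h = false -> (i < n)%nat -> 0 <= rent i h.
Proof.
  intros Hv He Hi. unfold rent. apply Rmult_le_pos; [|left; apply exp_pos].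
  pose proof (value_ge_wealth i h Hv He Hi); lra.
Qed.

Lemma rent_le_prize i h : valid_history n reentry h -> ended h = false -> (i < n)%nat ->
  rent i h <= util rho (v - s).
Proof.
  intros Hv He Hi. pose proof (value_le_prize i h Hv He Hi) as U.
  rewrite util_shift, value_rent in U. apply (Rmult_le_reg_l (exp (- rho * wealth c v s i h))).
  - apply exp_pos.
  - lra.
Qed.

Definition node i h := valid_history n reentry h /\ ended h = false /\ act h i = true.

Lemma node_lt i h : node i h -> (i < n)%nat.
Proof. intros [_ [_ H]]. apply (active_lt n reentry h i H). Qed.

Lemma Pr_affine i h a : Pr h a = sigma i h * dev_prob h i 1 a + (1 - sigma i h) * dev_prob h i 0 a.
Proof.
  unfold Pr, prob, dev_prob. rewrite <- prof_prob_affine. apply prof_prob_ext. intros j _.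
  unfold with_prob. destruct (Nat.eqb_spec j i); subst; auto.
Qed.

Lemma dev_prob1_nobid i h a : act h i = true -> (i < length a)%nat -> bids a i = false ->
  dev_prob h i 1 a = 0.
Proof.
  intros Ha Hl Hb. unfold dev_prob. apply (prof_prob_zero _ _ i a 0); rewrite ?Nat.sub_0_r; [lia|auto|].
  unfold bids in Hb. rewrite Hb. unfold bid_factor. rewrite Ha.
  unfold with_prob. rewrite Nat.eqb_refl. lra.
Qed.

Lemma dev_prob0_bid i h a : bids a i = true -> dev_prob h i 0 a = 0.
Proof.
  intros Hb. apply (prof_prob_bid_zero _ _ i a Hb). unfold bid_factor, with_prob.
  rewrite Nat.eqb_refl. destruct (act h i); auto.
Qed.

Lemma dev_prob_sum h i x : lsum (all_profiles n) (dev_prob h i x) = 1.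
Proof. apply prof_prob_sum. Qed.

Lemma dev_prob_nonneg h i x a : 0 <= x <= 1 -> 0 <= dev_prob h i x a.
Proof.
  intros Hx. apply prof_prob_nonneg. intros j. unfold with_prob.
  destruct (Nat.eqb j i); auto. apply sigma_valid.
Qed.

Definition bid_value i h := lsum (all_profiles n) (fun a => dev_prob h i 1 a * value i (h ++ [a])).
Definition nobid_value i h := lsum (all_profiles n) (fun a => dev_prob h i 0 a * value i (h ++ [a])).

Lemma value_mix i h : node i h ->
  value i h = sigma i h * bid_value i h + (1 - sigma i h) * nobid_value i h.
Proof.
  intros Hjh. destruct Hjh as [Hv [He Ha]] eqn:E.
  rewrite value_decomp by (auto; apply (node_lt i h Hjh)).
  unfold bid_value, nobid_value. rewrite <- !lsum_scal, <- lsum_plus. apply lsum_ext. intros a _.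
  rewrite (Pr_affine i). ring.
Qed.

Lemma bid_value_le i h : node i h -> bid_value i h <= value i h.
Proof. intros Hjh. pose proof (node_lt i h Hjh). destruct Hjh as [Hv [He Ha]]. apply one_shot_le; auto. lra. Qed.

Lemma nobid_value_le i h : node i h -> nobid_value i h <= value i h.
Proof. intros Hjh. pose proof (node_lt i h Hjh). destruct Hjh as [Hv [He Ha]]. apply one_shot_le; auto. lra. Qed.

Lemma value_bid i h : node i h -> 0 < sigma i h -> value i h = bid_value i h.
Proof.
  intros Hjh Hq. pose proof (value_mix i h Hjh). pose proof (bid_value_le i h Hjh).
  pose proof (nobid_value_le i h Hjh). pose proof (sigma_valid i h).
  apply Rle_antisym; [|auto]. apply Rnot_lt_le. intros Hlt. nra.
Qed.

Lemma value_nobid i h : node i h -> sigma i h < 1 -> value i h = nobid_value i h.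
Proof.
  intros Hjh Hq. pose proof (value_mix i h Hjh). pose proof (bid_value_le i h Hjh).
  pose proof (nobid_value_le i h Hjh). pose proof (sigma_valid i h).
  apply Rle_antisym; [|auto]. apply Rnot_lt_le. intros Hlt. nra.
Qed.

Definition stay i h a := negb (bids a i) && negb (ended (h ++ [a])) && act (h ++ [a]) i.

Lemma exit_EU i h a m : node i h -> bids a i = false -> stay i h a = false ->
  EUs i (h ++ [a]) m = util rho (wealth c v s i h).
Proof.
  intros [Hv [He Ha]] Hb Hs. pose proof (nonended_not_won i h He) as Hw.
  destruct (wealth_nobid c v s i h a Hw Hb) as [W1 W2]. rewrite <- W1.
  unfold stay in Hs. rewrite Hb in Hs. simpl in Hs.
  unfold EUs. destruct (ended (h ++ [a])) eqn:E; [apply EU_ended; auto|].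
  apply (EU_never_bid n reentry rho c v s sigma i (fun h' => act h' i = false)); auto.
  - intros h' a' H' Hb'. apply (prof_prob_bid_zero _ _ i a' Hb').
    unfold bid_factor. unfold act in H'. rewrite H'. auto.
  - intros h' a' H' Hb'. unfold act in *. apply inactive_child; auto.
Qed.

Lemma exit_value i h a : node i h -> bids a i = false -> stay i h a = false ->
  value i (h ++ [a]) = util rho (wealth c v s i h).
Proof.
  intros. apply value_eq. intros eps He. exists 0%nat. intros T _. rewrite exit_EU by auto.
  unfold Rdist. rewrite Rminus_diag, Rabs_R0. lra.
Qed.

Lemma stay_wealth i h a : node i h -> stay i h a = true ->
  wealth c v s i (h ++ [a]) = wealth c v s i h.
Proof.
  intros [Hv [He Ha]] Hs. unfold stay in Hs. apply andb_true_iff in Hs as [Hs _].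
  apply andb_true_iff in Hs as [H1 _]. apply negb_true_iff in H1.
  apply (wealth_nobid c v s i h a); auto. apply nonended_not_won; auto.
Qed.

Lemma stay_node i h a Q : node i h -> stay i h a = true -> In a (all_profiles n) ->
  prof_prob Q (act h) a 0 <> 0 -> node i (h ++ [a]).
Proof.
  intros [Hv [He Ha]] Hs Hin HP. unfold stay in Hs. apply andb_true_iff in Hs as [Hs H3].
  apply andb_true_iff in Hs as [_ H2]. apply negb_true_iff in H2.
  split; [eapply child_valid; eauto|auto].
Qed.

Lemma bid_node i h a Q : node i h -> bids a i = true -> Nat.eqb (nbidders a) 1 = false ->
  In a (all_profiles n) -> prof_prob Q (act h) a 0 <> 0 ->
  node i (h ++ [a]) /\ wealth c v s i (h ++ [a]) = wealth c v s i h - c.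
Proof.
  intros [Hv [He Ha]] Hb Hnb Hin HP. split; [split; [eapply child_valid; eauto|split]|].
  - rewrite ended_app, He, Hnb. auto.
  - apply bid_child_active; auto.
  - destruct (wealth_bid c v s i h a (nonended_not_won i h He) Hb) as [W1 _]. rewrite W1, Hnb. lra.
Qed.

Lemma dev_prob1_onlyp i h : act h i = true ->
  dev_prob h i 1 (onlyp n i) = win_prob_if_bid n reentry sigma h i.
Proof.
  intros Ha. unfold dev_prob, onlyp. rewrite prof_prob_map. unfold win_prob_if_bid. apply prod_ext.
  intros m Hm. unfold bid_factor, with_prob, act in *. destruct (Nat.eqb_spec m i) as [->|Hne].
  - rewrite Ha. reflexivity.
  - destruct (active n reentry h m); reflexivity.
Qed.

Lemma bid_sum_split i h (f : profile -> R) : act h i = true -> (i < n)%nat ->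
  lsum (all_profiles n) (fun a => dev_prob h i 1 a * f a) =
  win_prob_if_bid n reentry sigma h i * f (onlyp n i)
  + lsum (all_profiles n)
      (fun a => dev_prob h i 1 a * (if bids a i && negb (Nat.eqb (nbidders a) 1) then f a else 0)).
Proof.
  intros Ha Hi.
  rewrite (lsum_ext _ _ (fun a => (if list_eq_dec bool_dec a (onlyp n i) then dev_prob h i 1 a * f (onlyp n i) else 0)
     + dev_prob h i 1 a * (if bids a i && negb (Nat.eqb (nbidders a) 1) then f a else 0))).
  - rewrite lsum_plus, (lsum_point n (onlyp n i) (fun a => dev_prob h i 1 a * f (onlyp n i)))
      by apply onlyp_length.
    rewrite dev_prob1_onlyp; auto.
  - intros a Hin. apply all_profiles_length in Hin.
    destruct (bids a i) eqn:Hb.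
    + destruct (Nat.eqb_spec (nbidders a) 1) as [E1|E1]; simpl.
      * rewrite (single_bidder_eq n a i Hin Hb E1). destruct (list_eq_dec _ _ _); [lra|contradiction].
      * destruct (list_eq_dec _ _ _) as [->|]; [|lra]. rewrite nbidders_onlyp in E1 by auto. lia.
    + rewrite dev_prob1_nobid by (auto; lia). destruct (list_eq_dec _ _ _); lra.
Qed.

Lemma bid_lose_mass i h : act h i = true -> (i < n)%nat ->
  lsum (all_profiles n)
    (fun a => dev_prob h i 1 a * (if bids a i && negb (Nat.eqb (nbidders a) 1) then 1 else 0))
  = 1 - win_prob_if_bid n reentry sigma h i.
Proof.
  intros Ha Hi. pose proof (bid_sum_split i h (fun _ => 1) Ha Hi) as X.
  rewrite (lsum_ext _ _ (dev_prob h i 1)), dev_prob_sum in X by (intros; ring).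
  cbv beta in X. lra.
Qed.

Lemma win_prob_range i h : 0 <= win_prob_if_bid n reentry sigma h i <= 1.
Proof.
  unfold win_prob_if_bid. apply prod_range. intros m _.
  destruct (active n reentry h m && negb (Nat.eqb m i)); pose proof (sigma_valid m h); lra.
Qed.

Definition win_gain := util rho (v - s - c).
Definition bid_loss := - util rho (- c).

Lemma win_gain_pos : 0 < win_gain.
Proof. unfold win_gain. apply util_pos; auto. lra. Qed.

Lemma bid_loss_pos : 0 < bid_loss.
Proof.
  unfold bid_loss. assert (util rho (- c) < util rho 0) by (apply util_lt; auto; lra).
  rewrite util_0 in H. lra.
Qed.

Definition Kc R0 := potential_const win_gain bid_loss R0.

(** ** The staying process of a player with near-maximal rent *)

(** We follow [i] along the histories where she keeps staying in the
    game without bidding; her wealth remains [w0] there. *)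
Section Staying.
Variables (R0 : R) (i : nat) (w0 : R).
Hypothesis HR0 : 0 < R0.
Hypothesis HRb : forall j h, node j h -> rent j h <= R0.

Definition deficit h := R0 - rent i h.
Definition stayw h a := if stay i h a then Pr h a else 0.
Definition snode h := node i h /\ wealth c v s i h = w0.
Definition scale := exp (- rho * w0).

Fixpoint stay_prob T h := match T with
  | O => 1
  | S T' => lsum (all_profiles n) (fun a => stayw h a * stay_prob T' (h ++ [a])) end.
Fixpoint stay_deficit T h := match T with
  | O => deficit h
  | S T' => lsum (all_profiles n) (fun a => stayw h a * stay_deficit T' (h ++ [a])) end.
Fixpoint stay_surplus T h := match T with
  | O => value i h - util rho w0
  | S T' => lsum (all_profiles n) (fun a => stayw h a * stay_surplus T' (h ++ [a])) end.
Fixpoint stay_surplus_trunc T m h := match T with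
  | O => EUs i h m - util rho w0
  | S T' => lsum (all_profiles n) (fun a => stayw h a * stay_surplus_trunc T' m (h ++ [a])) end.

Lemma stayw_nonneg h a : 0 <= stayw h a.
Proof. unfold stayw. destruct (stay i h a); [apply prob_nonneg, sigma_valid|lra]. Qed.

Lemma stayw_child h a : snode h -> In a (all_profiles n) -> stayw h a <> 0 -> snode (h ++ [a]).
Proof.
  intros [Hh Hw] Hin HW. unfold stayw in HW. destruct (stay i h a) eqn:S; [|contradiction].
  split; [apply (stay_node i h a (fun j => sigma j h)); auto|]. rewrite stay_wealth; auto.
Qed.

Lemma stayw_sum_le h : lsum (all_profiles n) (stayw h) <= 1.
Proof.
  rewrite <- (prob_sum n reentry sigma h). apply lsum_le. intros a _. unfold stayw.
  destruct (stay i h a); [apply Rle_refl|apply prob_nonneg, sigma_valid].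
Qed.

Lemma stayw_sum_le_compat h (F G : profile -> R) : snode h ->
  (forall a, In a (all_profiles n) -> snode (h ++ [a]) -> F a <= G a) ->
  lsum (all_profiles n) (fun a => stayw h a * F a) <= lsum (all_profiles n) (fun a => stayw h a * G a).
Proof.
  intros Hh H. apply lsum_le. intros a Hin. destruct (Req_dec (stayw h a) 0) as [E|E].
  - rewrite E. lra.
  - apply Rmult_le_compat_l; [apply stayw_nonneg|]. apply H; auto. apply stayw_child; auto.
Qed.

Lemma stayw_sum_ext h (F G : profile -> R) : snode h ->
  (forall a, In a (all_profiles n) -> snode (h ++ [a]) -> F a = G a) ->
  lsum (all_profiles n) (fun a => stayw h a * F a) = lsum (all_profiles n) (fun a => stayw h a * G a).
Proof.
  intros Hh H. apply lsum_ext. intros a Hin. destruct (Req_dec (stayw h a) 0) as [E|E].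
  - rewrite E. lra.
  - rewrite H; auto. apply stayw_child; auto.
Qed.

Lemma deficit_nonneg h : snode h -> 0 <= deficit h.
Proof. intros [Hh _]. unfold deficit. pose proof (HRb i h Hh). lra. Qed.

Lemma stay_prob_range T : forall h, snode h -> 0 <= stay_prob T h <= 1.
Proof.
  induction T; intros h Hh; simpl; [lra|]. split.
  - apply lsum_nonneg. intros a Hin. destruct (Req_dec (stayw h a) 0) as [E|E]; [rewrite E; lra|].
    apply Rmult_le_pos; [apply stayw_nonneg|apply IHT; apply stayw_child; auto].
  - eapply Rle_trans; [|apply (stayw_sum_le h)].
    rewrite (lsum_ext _ (stayw h) (fun a => stayw h a * 1)) by (intros; lra).
    apply stayw_sum_le_compat; auto. intros a _ Hch. apply IHT; auto.
Qed.

Lemma stay_deficit_nonneg T : forall h, snode h -> 0 <= stay_deficit T h.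
Proof.
  induction T; intros h Hh; simpl; [apply deficit_nonneg; auto|].
  apply lsum_nonneg. intros a Hin. destruct (Req_dec (stayw h a) 0) as [E|E]; [rewrite E; lra|].
  apply Rmult_le_pos; [apply stayw_nonneg|apply IHT; apply stayw_child; auto].
Qed.

Lemma stay_surplus_eq T : forall h, snode h ->
  stay_surplus T h = scale * (R0 * stay_prob T h - stay_deficit T h).
Proof.
  induction T; intros h Hh.
  - simpl. destruct Hh as [_ Hw]. rewrite value_rent, Hw. unfold deficit, scale. ring.
  - simpl. rewrite (stayw_sum_ext h _ (fun a => scale * (R0 * stay_prob T (h ++ [a]) - stay_deficit T (h ++ [a]))))
      by (first [assumption | intros; apply IHT; auto]).
    rewrite <- (lsum_scal _ R0), <- lsum_minus, <- lsum_scal. apply lsum_ext. intros; ring.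
Qed.

(** The most a player at wealth [w0] can gain: winning with one more bid. *)
Definition prize_gain := util rho (w0 - c + (v - s)) - util rho w0.

Lemma prize_gain_pos : 0 < prize_gain.
Proof.
  unfold prize_gain. assert (util rho w0 < util rho (w0 - c + (v - s))) by (apply util_lt; auto; lra).
  lra.
Qed.

Lemma prize_gain_eq : prize_gain = scale * win_gain.
Proof.
  unfold prize_gain, win_gain, scale. replace (w0 - c + (v - s)) with (w0 + (v - s - c)) by ring.
  rewrite util_shift. ring.
Qed.

(** A staying player gains nothing until she leaves the staying process:
    her truncated surplus is at most the gain times the probability of
    leaving within [m] rounds. *)
Lemma trunc_surplus_le_leave m : forall h, snode h ->
  EUs i h m - util rho w0 <= prize_gain * (1 - stay_prob m h).
Proof.
  induction m; intros h Hh.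
  - simpl. unfold EUs. simpl. destruct Hh as [_ Hw]. rewrite Hw. lra.
  - pose proof Hh as Hh0. destruct Hh0 as [[Hv [He Ha]] Hw]. unfold EUs. rewrite EU_step by auto.
    set (leaves := fun a => if bids a i then 1 else if stay i h a then 1 else 0).
    assert (Hsum : lsum (all_profiles n) (fun a => Pr h a * EUs i (h ++ [a]) m - Pr h a * util rho w0)
      <= lsum (all_profiles n) (fun a => prize_gain * (Pr h a * leaves a) - prize_gain * (stayw h a * stay_prob m (h ++ [a])))).
    { apply lsum_le. intros a Hin. pose proof (prob_nonneg n reentry sigma h a sigma_valid) as Hp.
      fold (Pr h a) in Hp. unfold leaves, stayw. pose proof prize_gain_pos.
      destruct (bids a i) eqn:Hb.
      - (* after a bid: the surplus is at most the prize *)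
        assert (S : stay i h a = false) by (unfold stay; rewrite Hb; auto). rewrite S.
        assert (EUs i (h ++ [a]) m <= util rho (w0 - c + (v - s))).
        { eapply Rle_trans; [apply (EU_upper n reentry rho c v s sigma i sigma_valid Hr); lra|].
          apply util_le; auto. unfold best_wealth. pose proof (nonended_not_won i h He) as Hnw.
          destruct (wealth_bid c v s i h a Hnw Hb) as [W1 W2]. rewrite W1, W2, Hw.
          destruct (Nat.eqb (nbidders a) 1); lra. }
        unfold prize_gain in *. nra.
      - destruct (stay i h a) eqn:S.
        +
          destruct (Req_dec (Pr h a) 0) as [E|E]; [rewrite E; lra|].
          assert (Hch : snode (h ++ [a])) by (apply stayw_child; auto; unfold stayw; rewrite S; auto).
          specialize (IHm _ Hch). nra.
        + (* leaving without a bid: no surplus *)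
          rewrite (exit_EU i h a m) by (repeat split; auto). rewrite Hw. lra. }
    rewrite <- (prob_sum_const n reentry sigma h (util rho w0)), <- lsum_minus.
    fold EUs. eapply Rle_trans; [exact Hsum|]. rewrite lsum_minus, !lsum_scal. simpl stay_prob.
    assert (HS : lsum (all_profiles n) (fun a => Pr h a * leaves a) <= 1).
    { eapply Rle_trans; [|right; apply (prob_sum n reentry sigma h)].
      apply lsum_le. intros a _. pose proof (prob_nonneg n reentry sigma h a sigma_valid).
      unfold leaves, Pr. destruct (bids a i); [|destruct (stay i h a)]; lra. }
    pose proof prize_gain_pos. nra.
Qed.

Lemma stay_surplus_trunc_le T m : forall h, snode h ->
  stay_surplus_trunc T m h <= prize_gain * (stay_prob T h - stay_prob (T + m) h).
Proof.
  induction T; intros h Hh.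
  - simpl. apply trunc_surplus_le_leave; auto.
  - simpl stay_surplus_trunc. simpl stay_prob. eapply Rle_trans.
    + apply (stayw_sum_le_compat h _ (fun a => prize_gain * (stay_prob T (h ++ [a]) - stay_prob (T + m) (h ++ [a])))); auto.
    + right. rewrite <- lsum_minus, <- lsum_scal. apply lsum_ext. intros; ring.
Qed.

Lemma stay_surplus_trunc_cv T : forall h, snode h ->
  Un_cv (fun m => stay_surplus_trunc T m h) (stay_surplus T h).
Proof.
  induction T; intros h Hh.
  - simpl. apply CV_minus; [|apply Un_cv_const]. destruct Hh as [Hjh _].
    apply value_cv; [apply Hjh|apply (node_lt i h Hjh)].
  - simpl. apply Un_cv_sum. intros a Hin. destruct (Req_dec (stayw h a) 0) as [E|E]; [left; auto|right].
    apply IHT. apply stayw_child; auto.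
Qed.

Lemma stay_surplus_le T h L : snode h -> (forall k, L <= stay_prob k h) ->
  stay_surplus T h <= prize_gain * (stay_prob T h - L).
Proof.
  intros Hh HL. apply (lim_le _ _ _ (stay_surplus_trunc_cv T h Hh)). intros m.
  eapply Rle_trans; [apply stay_surplus_trunc_le; auto|].
  pose proof prize_gain_pos. specialize (HL (T + m)%nat). apply Rmult_le_compat_l; lra.
Qed.

Definition nobid_stay h :=
  lsum (all_profiles n) (fun a => dev_prob h i 0 a * (if stay i h a then 1 else 0)).
Definition nobid_stay_deficit h :=
  lsum (all_profiles n) (fun a => dev_prob h i 0 a * (if stay i h a then deficit (h ++ [a]) else 0)).

Lemma scale_pos : 0 < scale.
Proof. apply exp_pos. Qed.

Lemma stayw_eq h a : snode h -> In a (all_profiles n) ->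
  stayw h a = (1 - sigma i h) * (dev_prob h i 0 a * (if stay i h a then 1 else 0)).
Proof.
  intros [[Hv [He Ha]] Hw] Hin. unfold stayw. destruct (stay i h a) eqn:S; [|lra].
  unfold stay in S. apply andb_true_iff in S as [S _]. apply andb_true_iff in S as [S _].
  apply negb_true_iff in S. rewrite (Pr_affine i h a), dev_prob1_nobid; auto; [ring|].
  apply all_profiles_length in Hin. rewrite Hin. apply (active_lt n reentry h i Ha).
Qed.

(** Not bidding is worth the rent kept by staying (leaving yields no rent). *)
Lemma nobid_value_eq h : snode h ->
  nobid_value i h = util rho w0 + scale * (R0 * nobid_stay h - nobid_stay_deficit h).
Proof.
  intros Hh. pose proof Hh as [Hjh Hw]. unfold nobid_value, nobid_stay, nobid_stay_deficit.
  rewrite (lsum_ext _ _ (fun a => util rho w0 * dev_prob h i 0 a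
      + scale * (R0 * (dev_prob h i 0 a * (if stay i h a then 1 else 0))
                 - dev_prob h i 0 a * (if stay i h a then deficit (h ++ [a]) else 0)))).
  - rewrite lsum_plus, lsum_scal, dev_prob_sum, lsum_scal, lsum_minus, lsum_scal. ring.
  - intros a Hin. destruct (bids a i) eqn:Hb; [rewrite dev_prob0_bid by auto; ring|].
    destruct (stay i h a) eqn:S.
    + rewrite value_rent, stay_wealth, Hw by auto. unfold deficit, scale. ring.
    + rewrite exit_value, Hw by auto. ring.
Qed.

(** Bidding wins the prize with probability [p]; otherwise the player stays,
    poorer by [c], with a rent of at most [R0]. *)
Lemma bid_value_bound h : snode h ->
  bid_value i h <= win_prob_if_bid n reentry sigma h i * util rho (w0 - c + (v - s))
   + (1 - win_prob_if_bid n reentry sigma h i) * (util rho (w0 - c) + exp (- rho * (w0 - c)) * R0).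
Proof.
  intros Hh. pose proof Hh as [Hjh Hw]. pose proof (node_lt i h Hjh) as Hi.
  destruct Hjh as [Hv [He Ha]].
  set (p := win_prob_if_bid n reentry sigma h i).
  set (Y := util rho (w0 - c) + exp (- rho * (w0 - c)) * R0).
  set (lose := fun a => bids a i && negb (Nat.eqb (nbidders a) 1)).
  unfold bid_value. rewrite (bid_sum_split i h (fun a => value i (h ++ [a]))) by auto. fold p.
  assert (Hwin : value i (h ++ [onlyp n i]) = util rho (w0 - c + (v - s))).
  { assert (Hnb : nbidders (onlyp n i) = 1%nat) by (apply nbidders_onlyp; auto).
    rewrite value_ended by (rewrite ended_app, Hnb; apply orb_true_r).
    destruct (wealth_bid c v s i h (onlyp n i) (nonended_not_won i h He) (bids_onlyp n i Hi)) as [W1 _].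
    rewrite W1, Hnb, Hw. reflexivity. }
  assert (Hlose : lsum (all_profiles n) (fun a => dev_prob h i 1 a * (if lose a then value i (h ++ [a]) else 0))
     <= lsum (all_profiles n) (fun a => Y * (dev_prob h i 1 a * (if lose a then 1 else 0)))).
  { apply lsum_le. intros a Hin. unfold lose. destruct (bids a i) eqn:Hb; simpl; [|lra].
    destruct (Nat.eqb (nbidders a) 1) eqn:Hnb; simpl; [lra|].
    destruct (Req_dec (dev_prob h i 1 a) 0) as [E|E]; [rewrite E; lra|].
    destruct (bid_node i h a _ ltac:(repeat split; auto) Hb Hnb Hin E) as [Hch W1].
    assert (value i (h ++ [a]) <= Y).
    { rewrite value_rent, W1, Hw. unfold Y. pose proof (HRb i _ Hch). pose proof (exp_pos (- rho * (w0 - c))).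
      apply Rplus_le_compat_l, Rmult_le_compat_l; lra. }
    pose proof (dev_prob_nonneg h i 1 a ltac:(lra)). nra. }
  rewrite lsum_scal in Hlose. unfold lose in Hlose. rewrite bid_lose_mass in Hlose by auto.
  rewrite Hwin. fold p in Hlose. lra.
Qed.

Lemma nobid_stay_range h : 0 <= nobid_stay h <= 1.
Proof.
  unfold nobid_stay. split.
  - apply lsum_nonneg. intros a _.
    apply Rmult_le_pos; [apply dev_prob_nonneg; lra|destruct (stay i h a); lra].
  - eapply Rle_trans; [|right; apply (dev_prob_sum h i 0)]. apply lsum_le. intros a _.
    pose proof (dev_prob_nonneg h i 0 a ltac:(lra)). destruct (stay i h a); lra.
Qed.

Lemma symmetric_rival h : snode h ->
  exists j, j <> i /\ act h j = true /\ sigma j h = sigma i h.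
Proof.
  intros [[Hv [He Ha]] _]. destruct (other_active n reentry h i Hn Hv He Ha) as [j [Hji Hja]].
  exists j. repeat split; auto.
Qed.

(** [i] wins only if her rival does not bid. *)
Lemma win_prob_le_rival h : snode h -> win_prob_if_bid n reentry sigma h i <= 1 - sigma i h.
Proof.
  intros Hh. destruct (symmetric_rival h Hh) as [j [Hji [Hja Hsj]]].
  unfold win_prob_if_bid. eapply Rle_trans.
  - apply (prod_le_factor _ _ j); [apply in_seq; pose proof (active_lt n reentry h j Hja); lia|].
    intros m _. destruct (active n reentry h m && negb (Nat.eqb m i)); pose proof (sigma_valid m h); lra.
  - unfold act in Hja. rewrite Hja. apply Nat.eqb_neq in Hji. rewrite Hji. simpl. lra.
Qed.

(** If [i] does not bid, her rival is the single bidder (so [i] leaves) with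
    probability at least [q * p]. *)
Lemma leave_prob_ge h : snode h -> sigma i h * win_prob_if_bid n reentry sigma h i <= 1 - nobid_stay h.
Proof.
  intros Hh. pose proof Hh as [[Hv [He Ha]] _].
  destruct (symmetric_rival h Hh) as [j [Hji [Hja Hsj]]]. pose proof (active_lt n reentry h j Hja) as Hj.
  assert (Rival : sigma j h * win_prob_if_bid n reentry sigma h i <= dev_prob h i 0 (onlyp n j)).
  { unfold win_prob_if_bid, dev_prob, onlyp. rewrite prof_prob_map.
    apply (prod_compare _ _ _ j); [apply seq_NoDup|apply sigma_valid| | |].
    - intros m Hm Hmj. unfold bid_factor, with_prob. apply Nat.eqb_neq in Hmj. rewrite Hmj.
      unfold act. destruct (Nat.eqb_spec m i) as [->|Hmi].
      + unfold act in Ha. rewrite Ha. simpl. lra.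
      + destruct (active n reentry h m); reflexivity.
    - intros m _. destruct (active n reentry h m && negb (Nat.eqb m i)); pose proof (sigma_valid m h); lra.
    - intros _. unfold bid_factor, with_prob. rewrite Nat.eqb_refl. unfold act in Hja |- *. rewrite Hja.
      apply Nat.eqb_neq in Hji. rewrite Hji. reflexivity. }
  assert (Excl : nobid_stay h + dev_prob h i 0 (onlyp n j) <= 1).
  { unfold nobid_stay. rewrite <- (lsum_point n (onlyp n j) (dev_prob h i 0)) by apply onlyp_length.
    rewrite <- lsum_plus. eapply Rle_trans; [|right; apply (dev_prob_sum h i 0)].
    apply lsum_le. intros a Hin.
    pose proof (dev_prob_nonneg h i 0 a ltac:(lra)).
    destruct (list_eq_dec bool_dec a (onlyp n j)) as [->|Hne].
    - assert (Ends : stay i h (onlyp n j) = false).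
      { unfold stay. rewrite ended_app, nbidders_onlyp, He by auto. simpl.
        rewrite andb_false_r. reflexivity. }
      rewrite Ends. lra.
    - destruct (stay i h a); lra. }
  rewrite Hsj in Rival. lra.
Qed.

Lemma nobid_rent h : snode h -> sigma i h < 1 ->
  R0 - deficit h = R0 * nobid_stay h - nobid_stay_deficit h.
Proof.
  intros Hh Hlt. pose proof Hh as [Hjh Hw]. pose proof (value_nobid i h Hjh Hlt) as E.
  rewrite nobid_value_eq, value_rent, Hw in E by auto. fold scale in E. pose proof scale_pos.
  unfold deficit. apply (Rmult_eq_reg_l scale); lra.
Qed.

Lemma bid_rent h : snode h -> 0 < sigma i h ->
  R0 - deficit h <= win_prob_if_bid n reentry sigma h i * win_gain
    + (1 - win_prob_if_bid n reentry sigma h i) * (R0 - bid_loss).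
Proof.
  intros Hh Hgt. pose proof Hh as [Hjh Hw].
  pose proof (win_prob_range i h) as Hp. set (p := win_prob_if_bid n reentry sigma h i) in *.
  pose proof (bid_value_bound h Hh) as B. fold p in B. rewrite <- value_bid, value_rent, Hw in B by auto.
  replace (w0 - c + (v - s)) with (w0 + (v - s - c)) in B by ring.
  replace (w0 - c) with (w0 + - c) in B by ring.
  rewrite !(util_shift rho w0) in B. fold scale in B.
  replace (exp (- rho * (w0 + - c))) with (scale * exp (rho * c)) in B
    by (unfold scale; rewrite <- exp_plus; f_equal; ring).
  assert (Hec : exp (rho * c) <= 1).
  { rewrite <- exp_0. destruct (Req_dec rho 0) as [->|Hr0]; [rewrite Rmult_0_l; lra|].
    left. apply exp_increasing. nra. }
  assert (B2 : scale * rent i h <= scale * (p * win_gain + (1 - p) * (- bid_loss + exp (rho * c) * R0)))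
    by (unfold win_gain, bid_loss; lra).
  apply Rmult_le_reg_l in B2; [|apply scale_pos].
  assert ((1 - p) * (exp (rho * c) * R0) <= (1 - p) * R0)
    by (apply Rmult_le_compat_l; nra).
  unfold deficit. lra.
Qed.

Lemma local_ineq h : snode h ->
  1 - lsum (all_profiles n) (stayw h)
  + Kc R0 * lsum (all_profiles n) (fun a => stayw h a * deficit (h ++ [a])) <= Kc R0 * deficit h.
Proof.
  intros Hh.
  assert (EW1 : lsum (all_profiles n) (stayw h) = (1 - sigma i h) * nobid_stay h).
  { unfold nobid_stay. rewrite <- lsum_scal. apply lsum_ext. intros a Hin. apply stayw_eq; auto. }
  assert (EW2 : lsum (all_profiles n) (fun a => stayw h a * deficit (h ++ [a]))
                = (1 - sigma i h) * nobid_stay_deficit h).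
  { unfold nobid_stay_deficit. rewrite <- lsum_scal. apply lsum_ext. intros a Hin.
    rewrite stayw_eq by auto. destruct (stay i h a); ring. }
  rewrite EW1, EW2. unfold Kc.
  apply one_round_potential with (p := win_prob_if_bid n reentry sigma h i).
  - apply sigma_valid.
  - apply nobid_stay_range.
  - apply deficit_nonneg; auto.
  - exact HR0.
  - exact win_gain_pos.
  - exact bid_loss_pos.
  - apply win_prob_range.
  - apply win_prob_le_rival; auto.
  - apply nobid_rent; auto.
  - apply bid_rent; auto.
  - apply leave_prob_ge; auto.
Qed.

Lemma leave_prob_le_deficit T : forall h, snode h ->
  1 - stay_prob T h <= Kc R0 * (deficit h - stay_deficit T h).
Proof.
  induction T; intros h Hh; [simpl; lra|].
  simpl stay_prob. simpl stay_deficit. pose proof (local_ineq h Hh) as LI.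
  assert (A : lsum (all_profiles n) (fun a => stayw h a * (1 - stay_prob T (h ++ [a])))
      <= lsum (all_profiles n) (fun a => stayw h a * (Kc R0 * (deficit (h ++ [a]) - stay_deficit T (h ++ [a])))))
    by (apply stayw_sum_le_compat; auto).
  assert (B : lsum (all_profiles n) (fun a => stayw h a * (1 - stay_prob T (h ++ [a])))
      = lsum (all_profiles n) (stayw h) - lsum (all_profiles n) (fun a => stayw h a * stay_prob T (h ++ [a]))).
  { rewrite <- lsum_minus. apply lsum_ext. intros; ring. }
  assert (C : lsum (all_profiles n) (fun a => stayw h a * (Kc R0 * (deficit (h ++ [a]) - stay_deficit T (h ++ [a]))))
      = Kc R0 * lsum (all_profiles n) (fun a => stayw h a * deficit (h ++ [a]))
        - Kc R0 * lsum (all_profiles n) (fun a => stayw h a * stay_deficit T (h ++ [a]))).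
  { rewrite <- !lsum_scal, <- lsum_minus. apply lsum_ext. intros; ring. }
  lra.
Qed.

(** A node whose deficit is small compared to [R0] cannot exist: the player
    would stay forever with high probability and yet collect her large rent
    only when leaving. *)
Lemma no_near_maximal_rent h : snode h -> deficit h < R0 / (2 * (Kc R0 * R0 + 1)) -> False.
Proof.
  intros Hh Hd. pose proof (potential_const_pos _ _ _ win_gain_pos bid_loss_pos HR0) as HK.
  fold (Kc R0) in HK. pose proof scale_pos. pose proof win_gain_pos.
  pose proof (deficit_nonneg h Hh).
  assert (HKd : (Kc R0 * R0 + 1) * deficit h < R0 / 2).
  { apply (Rmult_lt_compat_l (Kc R0 * R0 + 1)) in Hd; [|nra].
    replace ((Kc R0 * R0 + 1) * (R0 / (2 * (Kc R0 * R0 + 1)))) with (R0 / 2) in Hd by (field; nra).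
    lra. }
  (* the surplus stays above half the maximal one *)
  assert (Large : forall T, scale * (R0 / 2) < stay_surplus T h).
  { intros T. rewrite stay_surplus_eq by auto.
    pose proof (leave_prob_le_deficit T h Hh). pose proof (stay_deficit_nonneg T h Hh).
    pose proof (stay_prob_range T h Hh).
    assert (stay_prob T h >= 1 - Kc R0 * deficit h) by nra.
    assert (stay_deficit T h <= deficit h) by nra.
    assert (R0 * stay_prob T h - stay_deficit T h > R0 / 2) by nra.
    apply Rmult_lt_compat_l; lra. }
  (* but the staying probability is nearly constant from some round on *)
  destruct (sup_approx (fun x => exists k, x = - stay_prob k h) 0 (- stay_prob 0 h))
    as [mL [Hub Happrox]]; [eauto|intros x [k ->]; pose proof (stay_prob_range k h Hh); lra|].
  assert (HL : forall k, - mL <= stay_prob k h) by (intros k; specialize (Hub _ (ex_intro _ k eq_refl)); lra).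
  set (eta := R0 / (2 * win_gain)).
  destruct (Happrox eta) as [x [[k ->] Hk]]; [unfold eta; apply Rdiv_lt_0_compat; lra|].
  pose proof (stay_surplus_le k h (- mL) Hh HL) as Small. rewrite prize_gain_eq in Small.
  specialize (Large k).
  assert (scale * win_gain * (stay_prob k h - - mL) <= scale * win_gain * eta)
    by (apply Rmult_le_compat_l; [nra|lra]).
  assert (scale * win_gain * eta = scale * (R0 / 2)) by (unfold eta; field; lra).
  lra.
Qed.

End Staying.

(** Every rent vanishes: otherwise a node with rent close to the supremum of
    rents would contradict [no_near_maximal_rent]. *)
Lemma rent_zero j h : node j h -> rent j h = 0.
Proof.
  intros Hjh. pose proof Hjh as [Hv [He Ha]]. pose proof (node_lt j h Hjh) as Hj.
  pose proof (rent_nonneg j h Hv He Hj).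
  destruct (Req_dec (rent j h) 0) as [E|E]; auto. exfalso.
  destruct (sup_approx (fun r => exists j h, node j h /\ r = rent j h) (util rho (v - s)) (rent j h))
    as [R0 [Hub Happrox]]; [eauto|intros x [j' [h' [[A [B C]] ->]]]; apply rent_le_prize; auto;
                            apply (active_lt n reentry h' j' C)|].
  assert (HR0 : 0 < R0) by (specialize (Hub (rent j h) (ex_intro _ j (ex_intro _ h (conj Hjh eq_refl)))); lra).
  assert (HRb : forall j' h', node j' h' -> rent j' h' <= R0) by (intros; apply Hub; eauto).
  pose proof (potential_const_pos _ _ _ win_gain_pos bid_loss_pos HR0) as HK. fold (Kc R0) in HK.
  destruct (Happrox (R0 / (2 * (Kc R0 * R0 + 1)))) as [x [[j' [h' [Hn' ->]]] Hrr]];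
    [apply Rdiv_lt_0_compat; nra|].
  apply (no_near_maximal_rent R0 j' (wealth c v s j' h') HR0 HRb h'); [split; auto|].
  unfold deficit. lra.
Qed.

Lemma value_wealth i h : node i h -> value i h = util rho (wealth c v s i h).
Proof. intros Hjh. rewrite value_rent, rent_zero by auto. ring. Qed.

Lemma bid_value_wealth i h : node i h ->
  bid_value i h = win_prob_if_bid n reentry sigma h i * util rho (wealth c v s i h - c + (v - s))
    + (1 - win_prob_if_bid n reentry sigma h i) * util rho (wealth c v s i h - c).
Proof.
  intros Hjh. pose proof Hjh as [Hv [He Ha]]. pose proof (node_lt i h Hjh) as Hi.
  set (w := wealth c v s i h). set (p := win_prob_if_bid n reentry sigma h i).
  unfold bid_value. rewrite (bid_sum_split i h (fun a => value i (h ++ [a]))) by auto. fold p.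
  assert (Hnb : nbidders (onlyp n i) = 1%nat) by (apply nbidders_onlyp; auto).
  rewrite value_ended by (rewrite ended_app, Hnb; apply orb_true_r).
  destruct (wealth_bid c v s i h (onlyp n i) (nonended_not_won i h He) (bids_onlyp n i Hi)) as [W1 _].
  rewrite W1, Hnb. simpl. fold w. f_equal.
  pose proof (bid_lose_mass i h Ha Hi) as Lose. fold p in Lose.
  rewrite <- Lose, Rmult_comm, <- lsum_scal. apply lsum_ext. intros a Hin.
  destruct (bids a i) eqn:Hb; simpl; [|ring].
  destruct (Nat.eqb (nbidders a) 1) eqn:Hnba; simpl; [ring|].
  destruct (Req_dec (dev_prob h i 1 a) 0) as [E|E]; [rewrite E; ring|].
  destruct (bid_node i h a _ Hjh Hb Hnba Hin E) as [Hch W2].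
  rewrite value_wealth, W2 by auto. fold w. ring.
Qed.

(** Players bid with positive probability: if nobody bid, a lone bidder would
    win for sure, which is strictly profitable. *)
Lemma sigma_pos i h : node i h -> 0 < sigma i h.
Proof.
  intros Hjh. pose proof Hjh as [Hv [He Ha]]. pose proof (sigma_valid i h) as Hq.
  destruct (Rle_lt_or_eq_dec 0 (sigma i h) (proj1 Hq)) as [|E]; auto. exfalso.
  assert (Hp1 : win_prob_if_bid n reentry sigma h i = 1).
  { unfold win_prob_if_bid. apply prod_one. intros m Hm.
    destruct (active n reentry h m && negb (Nat.eqb m i)) eqn:Em; auto.
    apply andb_true_iff in Em as [Em _]. rewrite (Hsym h m i Hv Em Ha), <- E. lra. }
  pose proof (bid_value_le i h Hjh) as Hle.
  rewrite bid_value_wealth, value_wealth, Hp1 in Hle by auto.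
  assert (util rho (wealth c v s i h) < util rho (wealth c v s i h - c + (v - s)))
    by (apply util_lt; auto; lra).
  lra.
Qed.

Lemma win_prob_formula i h : node i h ->
  win_prob_if_bid n reentry sigma h i = util rho c / util rho (v - s).
Proof.
  intros Hjh. apply (cara_indifference rho (wealth c v s i h)); [auto|lra|].
  rewrite <- bid_value_wealth, <- value_wealth by auto. apply value_bid, sigma_pos; auto.
Qed.

End Equilibrium.

Theorem mainTheorem3 :
  forall (n : nat) (reentry : bool) (rho c v s : R),
    (2 <= n)%nat -> 0 < v -> 0 < c -> 0 <= s -> c < v - s -> rho <= 0 ->
    forall sigma : strategy_profile,
      is_SPE n reentry rho c v s sigma ->
      symmetric n reentry sigma ->
      forall (h : history) (i : nat),
        valid_history n reentry h -> ended h = false ->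
        active n reentry h i = true ->
        win_prob_if_bid n reentry sigma h i = util rho c / util rho (v - s).
Proof.
  intros n reentry rho c v s Hn Hv Hc Hs Hcvs Hr sigma Hspe Hsym h i Hvh He Ha.
  apply (win_prob_formula n reentry rho c v s sigma Hn Hc Hcvs Hr Hspe Hsym).
  repeat split; auto.
Qed.
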